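(* Let $q\ge 2$ be an integer and define $s_q(0)=0$ and $s_q(p)=s_q(p-1)+\lceil (s_q(p-1)+1)/(q-1)\rceil$ for positive integers $p$. Then $\operatorname{slog}(s_q(p),q)=p$ for all $p\ge0$, and for every integer $k\ge 0$, $\operatorname{slog}(k,q)$ equals the least $p\ge 0$ such that $k\le s_q(p)$.
   Context: The step logarithm is defined for positive integers $q$ and nonnegative integers $p$ by $\operatorname{slog}(0,q)=0$ and $\operatorname{slog}(p,q)=\operatorname{slog}(p-\lceil p/q\rceil,q)+1$ for $p\ge1$. *)

From mathcomp Require Import all_boot.
Set Implicit Arguments. Unset Strict Implicit. Unset Printing Implicit Defensive.

Definition ceil_div (p q : nat) : nat := (p + q.-1) %/ q.

(* slog with fuel: slog(0,q) = 0, slog(p,q) = slog(p - ceil(p/q), q) + 1.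
   For q >= 1 and p >= 1, ceil(p/q) >= 1, so fuel p suffices. *)
Fixpoint slog_fuel (fuel p q : nat) : nat :=
  match fuel with
  | 0 => 0
  | fuel'.+1 => if p == 0 then 0 else (slog_fuel fuel' (p - ceil_div p q) q).+1
  end.

Definition slog (p q : nat) : nat := slog_fuel p p q.

Fixpoint sq (q p : nat) : nat :=
  match p with
  | 0 => 0
  | p'.+1 => sq q p' + ceil_div (sq q p').+1 q.-1
  end.

Lemma slog0 q : slog 0 q = 0. Proof. by []. Qed.

(* The map p |-> s_q(p) is the upper adjoint of the step logarithm:
   k <= s_q(p) iff slog(k,q) <= p.  By induction on p this reduces to the
   one-step equivalence  k - ceil(k/q) <= s  iff  k <= s + ceil((s+1)/(q-1)),
   both sides of which say k(q-1) < q(s+1).  Since s_q is strictly increasing,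
   the Galois connection gives both parts of the theorem at once. *)

From mathcomp Require Import all_boot zify.

Set Implicit Arguments.
Unset Strict Implicit.

Lemma ceil_div_gt0 q k : 0 < q -> 0 < k -> 0 < ceil_div k q.
Proof. by move=> q_gt0 k_gt0; rewrite /ceil_div divn_gt0 //; lia. Qed.

Lemma slog_fuel_indep q n m k : 0 < q -> k <= n -> k <= m ->
  slog_fuel n k q = slog_fuel m k q.
Proof.
move=> q_gt0; elim: n m k => [|n IHn] [|m] k /= le_kn le_km //.
- by have -> : k = 0 by lia.
- by have -> : k = 0 by lia.
case: eqP => // /eqP k_neq0.
have cd_gt0 : 0 < ceil_div k q by apply: ceil_div_gt0 => //; rewrite lt0n.
by congr _.+1; apply: IHn; lia.
Qed.

Lemma slogE q k : 0 < q ->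
  slog k q = if k == 0 then 0 else (slog (k - ceil_div k q) q).+1.
Proof.
move=> q_gt0; rewrite /slog; case: k => [|k] //=.
have cd_gt0 := ceil_div_gt0 q_gt0 (ltn0Sn k).
by congr _.+1; apply: slog_fuel_indep => //; lia.
Qed.

Lemma subn_ceil_div_leq q k s : 2 <= q ->
  (k - ceil_div k q <= s) = (k <= s + ceil_div s.+1 q.-1).
Proof.
move=> q_ge2; rewrite /ceil_div.
have eq_k := divn_eq (k + q.-1) q.
have lt_r : (k + q.-1) %% q < q by rewrite ltn_pmod //; lia.
have eq_s := divn_eq (s.+1 + q.-1.-1) q.-1.
have lt_t : (s.+1 + q.-1.-1) %% q.-1 < q.-1 by rewrite ltn_pmod //; lia.
by apply/idP/idP; nia.
Qed.

Lemma leq_sq_slog q p k : 2 <= q -> (k <= sq q p) = (slog k q <= p).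
Proof.
move=> q_ge2; elim: p k => [|p IHp] k; rewrite slogE; try lia.
  by case: k.
by case: k => [|k] //=; rewrite ltnS -IHp -subn_ceil_div_leq.
Qed.

Lemma sq_ltS q p : 2 <= q -> sq q p < sq q p.+1.
Proof.
move=> q_ge2 /=; rewrite -[X in X < _]addn0 ltn_add2l.
by apply: ceil_div_gt0; lia.
Qed.

Theorem mainTheorem9 (q : nat) (hq : 2 <= q) :
  (forall p : nat, slog (sq q p) q = p) /\
  (forall k : nat,
     k <= sq q (slog k q) /\ (forall p : nat, p < slog k q -> sq q p < k)).
Proof.
split=> [p | k].
  apply/eqP; rewrite eqn_leq -leq_sq_slog // leqnn /=.
  case: p => // p; rewrite ltnNge -leq_sq_slog // -ltnNge.
  exact: sq_ltS.
split=> [|p lt_p_slog]; first by rewrite leq_sq_slog.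
by rewrite ltnNge leq_sq_slog // -ltnNge.
Qed.
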